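(* For every reduction $S$ in a TRS the following equivalences hold: (i) $S$ starting in $s$ is strongly $p$-continuous and total iff $S$ starting in $s$ is strongly $m$-continuous; and (ii) $S$ strongly $p$-converges from $s$ to $t$ and is total iff $S$ strongly $m$-converges from $s$ to $t$.
   Context: Partial terms are (possibly infinite) terms over $\Sigma_\bot=\Sigma\uplus\{\bot\}$; total terms contain no $\bot$. $s\le_\bot t$ iff $s$ arises from $t$ by replacing some subterm occurrences by $\bot$; this is a complete semilattice. For a non-empty sequence, $\liminf_{\iota\to\alpha}a_\iota=\bigvee_{\beta<\alpha}\bigwedge_{\beta\le\iota<\alpha}a_\iota$. On total terms $d(s,t)=2^{-k}$, $k$ the minimal depth where they differ. For a reduction $S=(t_\iota\to_{\pi_\iota}t_{\iota+1})_{\iota<\alpha}$ let $c_\iota$ be $t_\iota$ with the subterm at $\pi_\iota$ replaced by $\bot$. $S$ is strongly $p$-continuous if $\liminf_{\iota\to\lambda}c_\iota=t_\lambda$ for every limit $\lambda<\alpha$; it strongly $p$-converges to $t$ if it is strongly $p$-continuous and either $S$ is closed and $t$ is its last term, or $S$ is open and $t=\liminf_{\iota\to\alpha}c_\iota$. $S$ is strongly $m$-continuous if for every limit $\lambda<\alpha$, $\lim_{\iota\to\lambda}t_\iota=t_\lambda$ in $d$ and the depths $|\pi_\iota|$ tend to infinity as $\iota\to\lambda$; it strongly $m$-converges to $t$ if it is strongly $m$-continuous, $t=\lim_{\iota\to\hat\alpha}t_\iota$ ($\hat\alpha=\alpha+1$ for closed, $\alpha$ for open $S$), and, if $S$ is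 open, $|\pi_\iota|$ tends to infinity as $\iota\to\alpha$. ''Total'' means all terms of $S$ and the final term are total. *)

From Stdlib Require Import List Reals.
Import ListNotations.
Set Implicit Arguments.

(* Positions are lists of argument indices (0-based). *)
Definition pos := list nat.

Inductive label (F V : Type) : Type :=
| Fun : F -> label F V
| Var : V -> label F V
| Bot : label F V.
Arguments Fun {F V} _.
Arguments Var {F V} _.
Arguments Bot {F V}.

(* A (possibly infinite) partial term is a labelling of a tree domain:
   t p = None means p is not a position of t. *)
Definition term (F V : Type) := pos -> option (label F V).

Section Terms.
Variables (F V : Type) (ar : F -> nat).

Definition lab_arity (a : label F V) : nat :=
  match a with Fun f => ar f | _ => 0 end.

Definition wf (t : term F V) : Prop :=
  t [] <> None /\
  forall (p : pos) (i : nat),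
    t (p ++ [i]) <> None <-> exists a, t p = Some a /\ i < lab_arity a.

Definition total (t : term F V) : Prop := forall p, t p <> Some Bot.

Definition finite_term (t : term F V) : Prop :=
  exists n, forall p, t p <> None -> length p <= n.

Definition occurs_var (t : term F V) (x : V) : Prop :=
  exists p, t p = Some (Var x).

Definition is_var_term (t : term F V) : Prop :=
  exists x, t [] = Some (Var x).

Definition subterm (t : term F V) (q : pos) : term F V := fun p => t (q ++ p).

Fixpoint strip (q p : pos) : option pos :=
  match q, p with
  | [], _ => Some p
  | i :: q', j :: p' => if Nat.eqb i j then strip q' p' else None
  | _ :: _, [] => None
  end.

Definition replace (t : term F V) (q : pos) (u : term F V) : term F V :=
  fun p => match strip q p with Some r => u r | None => t p end.

Definition bot_term : term F V :=
  fun p => match p with [] => Some Bot | _ => None end.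

Fixpoint subst_at (sigma : V -> term F V) (t : term F V) (p : pos)
  : option (label F V) :=
  match t [] with
  | Some (Var x) => sigma x p
  | _ => match p with
         | [] => t []
         | i :: p' => subst_at sigma (fun q => t (i :: q)) p'
         end
  end.
Definition subst (sigma : V -> term F V) (t : term F V) : term F V :=
  subst_at sigma t.

Definition is_TRS (R : term F V -> term F V -> Prop) : Prop :=
  forall l r, R l r ->
    wf l /\ wf r /\ total l /\ total r /\ finite_term l /\
    ~ is_var_term l /\ (forall x, occurs_var r x -> occurs_var l x).

Definition step (R : term F V -> term F V -> Prop)
  (s : term F V) (pi : pos) (t : term F V) : Prop :=
  s pi <> None /\
  exists l r (sigma : V -> term F V),
    R l r /\ (forall x, wf (sigma x)) /\
    subterm s pi = subst sigma l /\ t = replace s pi (subst sigma r).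

Definition strict_prefix (q p : pos) : Prop := exists r, r <> [] /\ p = q ++ r.

(* s arises from t by replacing the subterm occurrences at the positions
   in P (positions of t) by bot *)
Definition le_bot (s t : term F V) : Prop :=
  exists P : pos -> Prop,
    (forall q, P q -> t q <> None) /\
    forall p,
      ((exists q, P q /\ strict_prefix q p) -> s p = None) /\
      (~ (exists q, P q /\ strict_prefix q p) -> P p -> s p = Some Bot) /\
      (~ (exists q, P q /\ strict_prefix q p) -> ~ P p -> s p = t p).

Definition is_glb (A : term F V -> Prop) (x : term F V) : Prop :=
  wf x /\ (forall y, A y -> le_bot x y) /\
  (forall z, wf z -> (forall y, A y -> le_bot z y) -> le_bot z x).
Definition is_lub (A : term F V -> Prop) (x : term F V) : Prop :=
  wf x /\ (forall y, A y -> le_bot y x) /\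
  (forall z, wf z -> (forall y, A y -> le_bot y z) -> le_bot x z).

Definition dist (s t : term F V) (r : R) : Prop :=
  (s = t /\ r = 0%R) \/
  (exists k : nat,
      (exists p, length p = k /\ s p <> t p) /\
      (forall p, length p < k -> s p = t p) /\
      r = (/ (2 ^ k))%R).

End Terms.

Definition strict_wellorder (J : Type) (lt : J -> J -> Prop) : Prop :=
  (forall i, ~ lt i i) /\
  (forall i j k, lt i j -> lt j k -> lt i k) /\
  (forall i j, lt i j \/ i = j \/ lt j i) /\
  well_founded lt.

(* A reduction S = (t_i ->_{pi_i} t_{i+1})_{i < alpha} is represented by the
   (nonempty) well-ordered set J of indices of its terms, i.e.
   J = alpha + 1 if S is closed (alpha zero or successor) and J = alpha if S is
   open; its steps are indexed by the elements of J having a successor. *)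
Record reduction (F V : Type) (ar : F -> nat)
  (R : term F V -> term F V -> Prop) : Type := {
  ridx : Type;
  rlt : ridx -> ridx -> Prop;
  r_wo : strict_wellorder rlt;
  r_inh : inhabited ridx;
  rterm : ridx -> term F V;
  rpos : ridx -> pos;
  r_wf : forall i, wf ar (rterm i);
  r_step : forall i j,
      rlt i j -> (forall k, rlt i k -> j = k \/ rlt j k) ->
      step ar R (rterm i) (rpos i) (rterm j)
}.
Arguments ridx {F V ar R} _.
Arguments rlt {F V ar R} _ _ _.
Arguments rterm {F V ar R} _ _.
Arguments rpos {F V ar R} _ _.

Section Reductions.
Variables (F V : Type) (ar : F -> nat) (TR : term F V -> term F V -> Prop).
Variable S : reduction ar TR.

Definition rle (i j : ridx S) : Prop := i = j \/ rlt S i j.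

Definition is_limit (l : ridx S) : Prop :=
  (exists i, rlt S i l) /\
  forall i, rlt S i l -> exists k, rlt S i k /\ rlt S k l.

Definition is_max (m : ridx S) : Prop := forall i, rle i m.
Definition is_min (m : ridx S) : Prop := forall i, rle m i.

(* closed: alpha is zero or a successor, i.e. the term indices have a max *)
Definition closed : Prop := exists m, is_max m.

Definition starts_in (s : term F V) : Prop :=
  forall m, is_min m -> rterm S m = s.

Definition total_red : Prop := forall i, total (rterm S i).

Definition ctx (i : ridx S) : term F V :=
  replace (rterm S i) (rpos S i) (@bot_term F V).

(* x = liminf_{i -> beta} a_i, where dom = {i | i < beta}:
   x = lub_{b<beta} glb_{b <= i < beta} a_i *)
Definition is_liminf (dom : ridx S -> Prop) (a : ridx S -> term F V)
  (x : term F V) : Prop :=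
  exists g : ridx S -> term F V,
    (forall b, dom b ->
       is_glb ar (fun y => exists i, dom i /\ rle b i /\ y = a i) (g b)) /\
    is_lub ar (fun y => exists b, dom b /\ y = g b) x.

Definition is_dlim (dom : ridx S -> Prop) (a : ridx S -> term F V)
  (x : term F V) : Prop :=
  forall eps : R, (0 < eps)%R ->
    exists b, dom b /\
      forall i, dom i -> rle b i -> forall r, dist (a i) x r -> (r < eps)%R.

Definition depth_to_inf (dom : ridx S -> Prop) : Prop :=
  forall n : nat, exists b, dom b /\
    forall i, dom i -> rle b i -> n <= length (rpos S i).

Definition p_continuous : Prop :=
  forall l, is_limit l -> is_liminf (fun i => rlt S i l) ctx (rterm S l).

Definition p_converges (t : term F V) : Prop :=
  p_continuous /\
  ((exists m, is_max m /\ t = rterm S m) \/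
   (~ closed /\ is_liminf (fun _ => True) ctx t)).

(* m-continuity / m-convergence are notions for reductions over total terms *)
Definition m_continuous : Prop :=
  total_red /\
  forall l, is_limit l ->
    is_dlim (fun i => rlt S i l) (rterm S) (rterm S l) /\
    depth_to_inf (fun i => rlt S i l).

Definition m_converges (t : term F V) : Prop :=
  m_continuous /\ total t /\
  ((exists m, is_max m /\ t = rterm S m) \/
   (~ closed /\ is_dlim (fun _ => True) (rterm S) t /\
    depth_to_inf (fun _ => True))).

End Reductions.

(* For total reductions both modes of convergence mean the same thing at a limit: for
   every depth n, from some index on the terms no longer change up to depth n and all
   redexes lie below depth n.  For the metric this is just the definition of d read
   through the distances 2^-n.  For the partial order, once a tail has stabilised up to
   depth n, the greatest lower bound of its contexts c_i agrees with the limit up to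
   depth n, so the liminf is the limit.  Conversely, a total liminf x is reached at each
   position by some tail bound (cutting x off there by a bot would give a smaller upper
   bound), finite branching makes this uniform at each depth, and since x contains no
   bot, the holes of the c_i must eventually lie below depth n. *)

From Pilot Require Import Defs.
From Stdlib Require Import List Reals.
From Stdlib Require Import Lia Lra Classical ClassicalEpsilon.
Import ListNotations.
Local Notation pos := Defs.pos.
Set Implicit Arguments.

Lemma strip_Some (q p r : pos) : strip q p = Some r <-> p = q ++ r.
Proof.
  revert p; induction q as [|i q IH]; intros [|j p]; simpl;
    try (split; intro H; congruence).
  destruct (Nat.eqb_spec i j) as [<-|Hij].
  - rewrite IH. split; intro H; [now subst | now inversion H].
  - split; intro H; [discriminate | inversion H; congruence].
Qed.

Lemma strip_None (q p : pos) : strip q p = None <-> ~ exists r, p = q ++ r.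
Proof.
  split.
  - intros H [r Hr]. apply strip_Some in Hr. congruence.
  - intros H. destruct (strip q p) as [r|] eqn:E; auto.
    exfalso. apply H. exists r. now apply strip_Some.
Qed.

Lemma strict_prefix_nil (q : pos) : ~ strict_prefix q [].
Proof. intros [r [Hr E]]. destruct q, r; simpl in E; congruence. Qed.

Lemma strict_prefix_snoc (q p : pos) j :
  strict_prefix q (p ++ [j]) <-> strict_prefix q p \/ q = p.
Proof.
  split.
  - intros [r [Hr E]]. destruct (exists_last Hr) as [r' [k ->]].
    rewrite app_assoc in E. apply app_inj_tail in E as [-> _].
    destruct r' as [|x r'].
    + right. now rewrite app_nil_r.
    + left. exists (x :: r'). split; [discriminate | reflexivity].
  - intros [[r [Hr ->]] | ->].
    + exists (r ++ [j]). split; [now destruct r | now rewrite app_assoc].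
    + exists [j]. split; [discriminate | reflexivity].
Qed.

Lemma strict_prefix_length (q p : pos) : strict_prefix q p -> length q < length p.
Proof. intros [[|x r] [Hr ->]]; [congruence | rewrite length_app; simpl; lia]. Qed.

Section WellFormed.
Variables (F V : Type) (ar : F -> nat).
Implicit Types (t u v x y z : term F V) (A : term F V -> Prop).

Lemma wf_undef_app t p r : wf ar t -> t p = None -> t (p ++ r) = None.
Proof.
  intros [_ Hw] Hp. induction r as [|j r IH] using rev_ind; [now rewrite app_nil_r|].
  rewrite app_assoc. destruct (t ((p ++ r) ++ [j])) eqn:E; auto.
  assert (Hn : t ((p ++ r) ++ [j]) <> None) by congruence.
  apply Hw in Hn as [a [Ha _]]. congruence.
Qed.

Lemma wf_bot_app t p r : wf ar t -> t p = Some Bot -> r <> [] -> t (p ++ r) = None.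
Proof.
  intros Hw Hp Hr. destruct r as [|j r]; [congruence|].
  replace (p ++ j :: r) with ((p ++ [j]) ++ r) by now rewrite <- app_assoc.
  apply wf_undef_app; auto.
  destruct (t (p ++ [j])) eqn:E; auto.
  assert (Hn : t (p ++ [j]) <> None) by congruence.
  apply (proj2 Hw) in Hn as [a [Ha Hl]]. rewrite Hp in Ha. injection Ha as <-.
  simpl in Hl. lia.
Qed.

Lemma wf_strict_prefix t q p :
  wf ar t -> strict_prefix q p -> t p <> None -> exists a, t q = Some a /\ a <> Bot.
Proof.
  intros Hw [r [Hr ->]] Hn. destruct (t q) as [a|] eqn:E.
  - exists a. split; auto. intros ->. apply Hn. now apply wf_bot_app.
  - exfalso. apply Hn. now apply wf_undef_app.
Qed.

Lemma wf_eq_upto u v n : wf ar u -> wf ar v ->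
  (forall p, length p <= n -> v p <> None -> u p = v p) ->
  forall p, length p <= n -> u p = v p.
Proof.
  intros Hu Hv H p. induction p as [|j p IH] using rev_ind; intros Hl.
  - apply H; auto. apply Hv.
  - rewrite length_app in Hl; simpl in Hl.
    destruct (v (p ++ [j])) eqn:E.
    + rewrite <- E. apply H; [rewrite length_app; simpl; lia | congruence].
    + destruct (u (p ++ [j])) eqn:E2; auto.
      assert (Hn : u (p ++ [j]) <> None) by congruence.
      apply (proj2 Hu) in Hn. rewrite IH in Hn by lia.
      apply (proj2 Hv) in Hn. congruence.
Qed.

Definition approx x y : Prop :=
  forall p, x p <> None -> (x p = Some Bot /\ y p <> None) \/ x p = y p.

Lemma approx_eq x y p : approx x y -> x p <> None -> x p <> Some Bot -> x p = y p.
Proof. intros H Hn Hb. now destruct (H p Hn) as [[]|]. Qed.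

Lemma le_bot_approx x y : le_bot x y -> approx x y.
Proof.
  intros [P [HP H]] p Hn. destruct (H p) as [H1 [H2 H3]].
  destruct (classic (exists q, P q /\ strict_prefix q p)) as [Ha|Ha]; [exfalso; auto|].
  destruct (classic (P p)); [left; split | right]; auto.
Qed.

Lemma approx_le_bot x y : wf ar x -> wf ar y -> approx x y -> le_bot x y.
Proof.
  intros Hx Hy Hl. exists (fun p => x p = Some Bot). split.
  { intros q Hq. destruct (Hl q) as [[_ H]|H]; congruence. }
  intros p. split; [|split]; auto.
  - intros [q [Hq [r [Hr ->]]]]. now apply wf_bot_app.
  - induction p as [|j p IH] using rev_ind; intros Ha Hp.
    + destruct (Hl []) as [[H _]|H]; auto. apply Hx. congruence.
    + assert (IHp : x p = y p).
      { apply IH.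
        - intros [q [Hq Hs]]. apply Ha. exists q. split; auto. apply strict_prefix_snoc; auto.
        - intros Hq. apply Ha. exists p. split; auto. apply strict_prefix_snoc; auto. }
      destruct (x (p ++ [j])) eqn:E.
      * rewrite <- E. apply approx_eq; auto; congruence.
      * destruct (y (p ++ [j])) eqn:E2; auto.
        assert (Hn : y (p ++ [j]) <> None) by congruence.
        apply (proj2 Hy) in Hn. rewrite <- IHp in Hn. apply (proj2 Hx) in Hn. congruence.
Qed.

Lemma replace_out t u q p : ~ (exists r, p = q ++ r) -> replace t q u p = t p.
Proof. intros H. unfold replace. apply strip_None in H. now rewrite H. Qed.

Lemma replace_in t u q r : replace t q u (q ++ r) = u r.
Proof. unfold replace. now rewrite (proj2 (strip_Some q (q ++ r) r) eq_refl). Qed.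

Lemma replace_at t u q : replace t q u q = u [].
Proof. rewrite <- (replace_in t u q []). now rewrite app_nil_r. Qed.

Lemma replace_short t u q p : length p < length q -> replace t q u p = t p.
Proof. intros H. apply replace_out. intros [r ->]. rewrite length_app in H. lia. Qed.

Lemma wf_replace_bot t q : wf ar t -> t q <> None -> wf ar (replace t q (bot_term F V)).
Proof.
  intros Hw Hq. split.
  - destruct q as [|i q]; [discriminate|].
    rewrite replace_out; [apply Hw | intros [r E]; discriminate].
  - intros p i. destruct (classic (exists r, p = q ++ r)) as [[r ->]|Hn].
    + rewrite <- app_assoc, !replace_in.
      split; [intros H; exfalso; apply H; now destruct r|].
      intros [a [Ha Hl]]. destruct r; inversion Ha; subst; simpl in Hl; lia.
    + rewrite (replace_out t (bot_term F V) q Hn).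
      destruct (classic (p ++ [i] = q)) as [<-|E].
      * rewrite replace_at. split; [intros _; apply Hw, Hq | discriminate].
      * rewrite replace_out; [apply Hw|].
        intros [r Er]. destruct r as [|k r _] using rev_ind.
        { rewrite app_nil_r in Er. auto. }
        rewrite app_assoc in Er. apply app_inj_tail in Er as [-> _]. eauto.
Qed.

Lemma exists_first_difference (s t : term F V) p : s p <> t p ->
  exists q, length q <= length p /\ s q <> t q /\
    forall q', length q' < length q -> s q' = t q'.
Proof.
  remember (length p) as n eqn:En. revert p En.
  induction n as [n IH] using (well_founded_ind Nat.lt_wf_0). intros p -> Hd.
  destruct (classic (exists q', length q' < length p /\ s q' <> t q')) as [[q' [Hlt Hd']]|Hno].
  - destruct (IH _ Hlt q' eq_refl Hd') as [q [Hq ?]]. exists q. split; [lia | auto].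
  - exists p. repeat split; auto. intros q' Hq'. apply NNPP. eauto.
Qed.

(* A total least upper bound is attained position by position: otherwise cutting
   it off at [p] would give a smaller upper bound. *)
Lemma lub_total_attained A x p : (forall y, A y -> wf ar y) ->
  Defs.is_lub ar A x -> total x -> x p <> None -> exists y, A y /\ y p = x p.
Proof.
  intros HwA [Hx [Hub Hleast]] Ht Hp. apply NNPP. intros Hno.
  assert (Hcut : le_bot x (replace x p (bot_term F V))).
  { apply Hleast; [now apply wf_replace_bot|].
    intros y Hy. apply approx_le_bot; [auto | now apply wf_replace_bot|].
    assert (Hyx : approx y x) by (apply le_bot_approx; auto).
    intros q Hq. destruct (classic (exists r, q = p ++ r)) as [[[|j r] ->]|Hn].
    - rewrite app_nil_r in *. rewrite replace_at.
      destruct (Hyx p Hq) as [[H _]|H]; [left; split; [auto | discriminate]|].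
      exfalso. eauto.
    - exfalso. destruct (wf_strict_prefix (HwA y Hy) (ltac:(now exists (j :: r))) Hq)
        as [a [Ha Hab]].
      apply Hno. exists y. split; auto. apply (approx_eq p Hyx); congruence.
    - rewrite replace_out by auto. apply Hyx, Hq. }
  destruct (le_bot_approx Hcut p Hp) as [[H _]|H]; apply (Ht p); auto.
  rewrite H, replace_at. reflexivity.
Qed.

Definition common_label A q a : Prop := forall y, A y -> y q = Some a.

Definition meet_spine A p : Prop :=
  forall q, strict_prefix q p -> exists a, a <> Bot /\ common_label A q a.

Definition meet A : term F V := fun p =>
  if excluded_middle_informative (meet_spine A p /\ forall y, A y -> y p <> None) then
    Some (match excluded_middle_informative (exists a, common_label A p a) with
          | left H => proj1_sig (constructive_indefinite_description _ H)
          | right _ => Bot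
          end)
  else None.

Lemma meet_Some A p a : meet A p = Some a ->
  meet_spine A p /\ (forall y, A y -> y p <> None) /\ (common_label A p a \/ a = Bot).
Proof.
  unfold meet. destruct excluded_middle_informative as [[Hs Hd]|]; [|discriminate].
  destruct excluded_middle_informative as [H|]; intros E; injection E as <-; auto.
  destruct constructive_indefinite_description; auto.
Qed.

Lemma meet_common A p a y0 :
  A y0 -> meet_spine A p -> common_label A p a -> meet A p = Some a.
Proof.
  intros H0 Hs Ha. unfold meet. destruct excluded_middle_informative as [_|Hn].
  - destruct excluded_middle_informative as [H|H]; [|exfalso; eauto].
    destruct constructive_indefinite_description as [b Hb]; simpl.
    rewrite <- (Ha y0 H0), (Hb y0 H0). reflexivity.
  - exfalso. apply Hn. split; auto. intros y Hy. rewrite (Ha y Hy). discriminate.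
Qed.

Lemma meet_defined A p : meet_spine A p -> (forall y, A y -> y p <> None) -> meet A p <> None.
Proof.
  intros Hs Hd. unfold meet. destruct excluded_middle_informative as [_|Hn]; [discriminate|].
  tauto.
Qed.

Lemma meet_spine_snoc A p j :
  meet_spine A (p ++ [j]) <-> meet_spine A p /\ exists a, a <> Bot /\ common_label A p a.
Proof.
  split.
  - intros H. split; [intros q Hq|]; apply H, strict_prefix_snoc; auto.
  - intros [H1 H2] q Hq. apply strict_prefix_snoc in Hq as [Hq | ->]; auto.
Qed.

Lemma meet_glb A y0 : A y0 -> (forall y, A y -> wf ar y) -> is_glb ar A (meet A).
Proof.
  intros H0 Hw.
  assert (Hwf : wf ar (meet A)).
  { split.
    - apply meet_defined; [intros q Hq; now apply strict_prefix_nil in Hq|].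
      intros y Hy. apply (Hw y Hy).
    - intros p i. split.
      + intros Hn. destruct (meet A (p ++ [i])) as [b|] eqn:E; [|congruence].
        apply meet_Some in E as [Hs [Hd _]].
        apply meet_spine_snoc in Hs as [Hs [a [Hab Ha]]].
        exists a. split; [eapply meet_common; eauto|].
        destruct (proj2 (Hw y0 H0) p i) as [Hi _].
        destruct (Hi (Hd y0 H0)) as [a' [Ha' Hl]]. rewrite (Ha y0 H0) in Ha'.
        now injection Ha' as ->.
      + intros [a [Ha Hl]]. apply meet_Some in Ha as [Hs [_ [Ha | ->]]]; [|simpl in Hl; lia].
        assert (Hab : a <> Bot) by (intros ->; simpl in Hl; lia).
        apply meet_defined; [apply meet_spine_snoc; eauto|].
        intros y Hy. apply (proj2 (Hw y Hy)). eauto. }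
  split; [exact Hwf | split].
  - intros y Hy. apply approx_le_bot; auto. intros p Hn.
    destruct (meet A p) as [a|] eqn:E; [|congruence].
    apply meet_Some in E as [_ [Hd [Ha | ->]]]; [right; symmetry; auto | left; auto].
  - intros z Hz Hlb. apply approx_le_bot; auto. intros p Hn.
    assert (Hl : forall y, A y -> approx z y) by (intros y Hy; apply le_bot_approx; auto).
    assert (Hs : meet_spine A p).
    { intros q Hq. destruct (wf_strict_prefix Hz Hq Hn) as [a [Ha Hab]].
      exists a. split; auto. intros y Hy. rewrite <- Ha. symmetry.
      apply (approx_eq _ (Hl y Hy)); congruence. }
    destruct (z p) as [a|] eqn:E; [|congruence].
    destruct (classic (a = Bot)) as [->|Hab].
    + left. split; auto. apply meet_defined; auto. intros y Hy.
      destruct (Hl y Hy p) as [[_ H]|H]; congruence.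
    + right. symmetry. apply (meet_common _ H0 Hs). intros y Hy. rewrite <- E. symmetry.
      apply (approx_eq _ (Hl y Hy)); congruence.
Qed.

Lemma meet_eq_upto A y0 x n : A y0 -> wf ar x ->
  (forall y, A y -> forall q, length q <= n -> y q = x q) ->
  forall p, length p <= n -> x p <> None -> meet A p = x p.
Proof.
  intros H0 Hx Hag p Hp Hn.
  destruct (x p) as [a|] eqn:E; [|congruence].
  apply (meet_common _ H0).
  - intros q Hq. destruct (wf_strict_prefix Hx Hq (ltac:(congruence))) as [b [Hb' Hbb]].
    exists b. split; auto. intros y Hy. rewrite Hag; auto. apply strict_prefix_length in Hq; lia.
  - intros y Hy. rewrite Hag; auto.
Qed.

End WellFormed.

Lemma inv_pow2_le (k n : nat) : k <= n -> (/ 2 ^ n <= / 2 ^ k)%R.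
Proof. intros H. apply Rinv_le_contravar; [apply pow_lt; lra | apply Rle_pow; auto; lra]. Qed.

Section Reductions.
Variables (F V : Type) (ar : F -> nat) (TR : term F V -> term F V -> Prop).
Variable S : reduction ar TR.

Lemma rle_trans i j k : rle S i j -> rle S j k -> rle S i k.
Proof. destruct (r_wo S) as [_ [Htr _]]. intros [->|H1] [->|H2]; unfold rle; eauto. Qed.

Lemma rle_total i j : rle S i j \/ rle S j i.
Proof.
  destruct (r_wo S) as [_ [_ [Htot _]]]. unfold rle.
  destruct (Htot i j) as [|[|]]; auto.
Qed.

(* The step from [i] to its immediate successor needs a redex at [rpos S i]. *)
Lemma rpos_defined i k : rlt S i k -> rterm S i (rpos S i) <> None.
Proof.
  destruct (r_wo S) as [_ [_ [Htot Hwf]]].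
  intros Hik. induction k as [k IH] using (well_founded_ind Hwf).
  destruct (classic (exists j, rlt S i j /\ rlt S j k)) as [[j [Hij Hjk]]|Hno]; [eauto|].
  apply (r_step S i Hik). intros j Hij.
  destruct (Htot k j) as [|[|]]; auto. exfalso; eauto.
Qed.

Lemma open_succ : ~ closed S -> forall i, exists k, rlt S i k.
Proof.
  destruct (r_wo S) as [Hirr [Htr [Htot _]]].
  intros Hc i. apply NNPP. intros Hn. apply Hc. exists i. intros j.
  destruct (Htot j i) as [|[|H]]; unfold rle; auto. exfalso; eauto.
Qed.

Lemma wf_ctx i : rterm S i (rpos S i) <> None -> wf ar (ctx S i).
Proof. intros H. apply wf_replace_bot; auto. apply r_wf. Qed.

Lemma ctx_short i p : length p < length (rpos S i) -> ctx S i p = rterm S i p.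
Proof. apply replace_short. Qed.

Section Tails.
Variable dom : ridx S -> Prop.

Definition eventually (P : ridx S -> Prop) : Prop :=
  exists b, dom b /\ forall i, dom i -> rle S b i -> P i.

Lemma eventually_and {P Q : ridx S -> Prop} :
  eventually P -> eventually Q -> eventually (fun i => P i /\ Q i).
Proof.
  intros [b1 [Hb1 H1]] [b2 [Hb2 H2]].
  destruct (rle_total b1 b2) as [H12|H21].
  - exists b2. split; auto. intros i Hi Hbi. split; eauto using rle_trans.
  - exists b1. split; auto. intros i Hi Hbi. split; eauto using rle_trans.
Qed.

Lemma eventually_mono {P Q : ridx S -> Prop} :
  (forall i, dom i -> P i -> Q i) -> eventually P -> eventually Q.
Proof. intros HPQ [b [Hb H]]. exists b. auto. Qed.

Lemma eventually_all_lt {P : ridx S -> Prop} {Q : nat -> ridx S -> Prop} {k : nat} :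
  (forall j, j < k -> eventually (Q j)) -> eventually P ->
  eventually (fun i => P i /\ forall j, j < k -> Q j i).
Proof.
  intros HQ HP. induction k as [|k IH].
  - apply (eventually_mono (P := P)); [|exact HP]. intros i _ H. split; [auto | lia].
  - apply (eventually_mono (P := fun i => (P i /\ forall j, j < k -> Q j i) /\ Q k i)).
    + intros i _ [[HPi HQi] HQk] . split; auto. intros j Hj.
      destruct (Nat.eq_dec j k) as [->|]; auto. apply HQi. lia.
    + apply eventually_and; auto.
Qed.

(* Finite branching turns pointwise eventual agreement into agreement up to any depth. *)
Lemma eventually_eq_upto (g : ridx S -> term F V) x : wf ar x ->
  (forall p, x p <> None -> eventually (fun i => g i p = x p)) ->
  forall m p, x p <> None -> eventually (fun i =>
    forall r, length r <= m -> x (p ++ r) <> None -> g i (p ++ r) = x (p ++ r)).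
Proof.
  intros Hx Hev m. induction m as [|m IH]; intros p Hp.
  - apply (eventually_mono (P := fun i => g i p = x p)); [|auto].
    intros i _ E [|j r] Hr _; [now rewrite app_nil_r | simpl in Hr; lia].
  - destruct (x p) as [a|] eqn:Ea; [|congruence].
    assert (Hsub : forall j, j < lab_arity ar a -> eventually (fun i =>
      forall r, length r <= m -> x ((p ++ [j]) ++ r) <> None ->
        g i ((p ++ [j]) ++ r) = x ((p ++ [j]) ++ r))).
    { intros j Hj. apply IH. apply (proj2 Hx). eauto. }
    refine (eventually_mono _ (eventually_all_lt Hsub (Hev p ltac:(congruence)))).
    intros i _ [Hroot Hchild] [|j r] Hr Hd; [now rewrite app_nil_r|].
    replace (p ++ j :: r) with ((p ++ [j]) ++ r) in * by now rewrite <- app_assoc.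
    apply Hchild; [|simpl in Hr; lia | auto].
    assert (Hc : x (p ++ [j]) <> None) by (intros E; apply Hd; eapply wf_undef_app; eauto).
    apply (proj2 Hx) in Hc as [a' [Ha' Hl]]. congruence.
Qed.

Definition stabilizes_to (x : term F V) : Prop :=
  forall n, eventually (fun i =>
    n < length (rpos S i) /\ forall p, length p <= n -> rterm S i p = x p).

Lemma stabilizes_wf x : stabilizes_to x -> wf ar x.
Proof.
  intros Hst.
  assert (Hag : forall n, exists i, forall p, length p <= n -> rterm S i p = x p).
  { intros n. destruct (Hst n) as [b [Hb H]]. exists b. apply (H b Hb). now left. }
  split.
  - destruct (Hag 0) as [i Hi]. rewrite <- Hi by (simpl; lia). apply (r_wf S i).
  - intros p j. destruct (Hag (length p + 1)) as [i Hi].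
    rewrite <- (Hi p), <- (Hi (p ++ [j])) by (rewrite ?length_app; simpl; lia).
    apply (r_wf S i).
Qed.

Lemma dlim_stabilizes x :
  is_dlim S dom (rterm S) x -> depth_to_inf S dom -> stabilizes_to x.
Proof.
  intros Hd Hdep n.
  assert (Heps : (0 < / 2 ^ n)%R) by (apply Rinv_0_lt_compat, pow_lt; lra).
  refine (eventually_mono _ (eventually_and (Hd _ Heps) (Hdep (Datatypes.S n)))).
  intros i _ [Hclose Hdeep]. split; [lia|].
  intros p Hp. apply NNPP. intros Hne.
  destruct (exists_first_difference _ _ _ Hne) as [q [Hqp [Hq Hfirst]]].
  assert (Hdist : Defs.dist (rterm S i) x (/ 2 ^ length q)%R)
    by (right; exists (length q); split; [exists q|]; auto).
  specialize (Hclose _ Hdist). assert (Hle := inv_pow2_le (k := length q) (n := n) ltac:(lia)). lra.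
Qed.

Lemma stabilizes_dlim x :
  stabilizes_to x -> is_dlim S dom (rterm S) x /\ depth_to_inf S dom.
Proof.
  intros Hst. split.
  - intros eps Heps.
    destruct (pow_lt_1_zero (/ 2) ltac:(rewrite Rabs_pos_eq; lra) eps Heps) as [N HN].
    specialize (HN N (le_n _)). rewrite pow_inv, Rabs_pos_eq in HN.
    2:{ left. apply Rinv_0_lt_compat, pow_lt; lra. }
    refine (eventually_mono _ (Hst N)). intros i _ [_ Hagree] r Hr.
    destruct Hr as [[_ ->]|[k [[p [Hpk Hpd]] [_ ->]]]]; [lra|].
    assert (Hk : N < k) by (apply Nat.nle_gt; intros Hkn; apply Hpd, Hagree; lia).
    assert (Hle := inv_pow2_le (k := N) (n := k) ltac:(lia)). lra.
  - intros n. refine (eventually_mono _ (Hst n)). intros i _ [Hn _]. lia.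
Qed.

Hypothesis dom_redex_defined : forall i, dom i -> rterm S i (rpos S i) <> None.

Definition ctx_tail (b : ridx S) (y : term F V) : Prop :=
  exists i, dom i /\ rle S b i /\ y = ctx S i.

Lemma stabilizes_liminf x : wf ar x -> total x -> stabilizes_to x ->
  is_liminf S dom (ctx S) x.
Proof.
  intros Hx Ht Hst.
  assert (Hglb : forall b, dom b -> is_glb ar (ctx_tail b) (meet (ctx_tail b))).
  { intros b Hb. apply meet_glb with (y0 := ctx S b); [exists b; split; [|split]; auto; now left|].
    intros y [i [Hi [_ ->]]]. apply wf_ctx; auto. }
  exists (fun b => meet (ctx_tail b)). split; [exact Hglb|]. split; [exact Hx|]. split.
  - intros y [b [Hb ->]]. apply (approx_le_bot (ar := ar)); [apply Hglb; auto | auto|]. intros p Hn.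
    assert (Hafter : eventually (rle S b)) by (exists b; split; auto).
    destruct (eventually_and Hafter (Hst (length p))) as [i [Hi Hev]].
    destruct (Hev i Hi (or_introl eq_refl)) as [Hbi [Hdeep Hag]].
    assert (Hlb : le_bot (meet (ctx_tail b)) (ctx S i)) by (apply Hglb; [|exists i]; auto).
    replace (x p) with (ctx S i p) by (rewrite ctx_short; auto).
    exact (le_bot_approx Hlb p Hn).
  - intros z Hz Hub. apply (approx_le_bot (ar := ar)); auto. intros p Hn.
    destruct (Hst (length p)) as [b [Hb Hag]].
    assert (Hm : meet (ctx_tail b) p = x p).
    { apply meet_eq_upto with (ar := ar) (y0 := ctx S b) (n := length p); auto; [exists b; split; [|split]; auto; now left|].
      intros y [i [Hi [Hbi ->]]] q Hq. destruct (Hag i Hi Hbi) as [Hdeep Hagi].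
      rewrite ctx_short by lia. auto. }
    assert (Hle : le_bot (meet (ctx_tail b)) z) by (apply Hub; eauto).
    destruct (le_bot_approx Hle p ltac:(congruence)) as [[H _]|H].
    + exfalso. apply (Ht p). congruence.
    + right. congruence.
Qed.

Lemma liminf_stabilizes x : total x -> is_liminf S dom (ctx S) x -> stabilizes_to x.
Proof.
  intros Ht [g [Hglb Hlub]].
  assert (Hx : wf ar x) by apply Hlub.
  assert (Hwg : forall b, dom b -> wf ar (g b)) by (intros b Hb; apply (Hglb b Hb)).
  assert (Hmono : forall b i, dom b -> dom i -> rle S b i -> approx (g b) (g i)).
  { intros b i Hb Hi Hbi. apply le_bot_approx, (Hglb i Hi); auto.
    intros y [k [Hk [Hik ->]]]. apply (Hglb b Hb). exists k. eauto using rle_trans. }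
  assert (Hev : forall p, x p <> None -> eventually (fun i => g i p = x p)).
  { intros p Hp.
    assert (HwA : forall y, (exists b, dom b /\ y = g b) -> wf ar y)
      by (intros y [b [Hb ->]]; auto).
    destruct (lub_total_attained p HwA Hlub Ht Hp) as [y [[b [Hb ->]] E]].
    exists b. split; auto. intros i Hi Hbi. rewrite <- E. symmetry.
    apply (approx_eq p (Hmono b i Hb Hi Hbi)); rewrite E; auto. }
  intros n. destruct (eventually_eq_upto g Hx Hev n [] (proj1 Hx)) as [b [Hb Hag]].
  exists b. split; auto. intros i Hi Hbi.
  assert (Hc : forall p, length p <= n -> ctx S i p = x p).
  { assert (Hwc : wf ar (ctx S i)) by (apply wf_ctx; auto).
    apply (wf_eq_upto Hwc Hx). intros p Hp Hxp.
    specialize (Hag b Hb (or_introl eq_refl) p Hp Hxp). simpl in Hag.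
    assert (Hl : le_bot (g b) (ctx S i)) by (apply (Hglb b Hb); exists i; auto).
    rewrite <- Hag. symmetry. apply (approx_eq p (le_bot_approx Hl)); rewrite Hag; auto. }
  assert (Hdeep : n < length (rpos S i)).
  { apply Nat.nle_gt. intros Hle. apply (Ht (rpos S i)).
    rewrite <- Hc by auto. unfold ctx. now rewrite replace_at. }
  split; auto. intros p Hp. rewrite <- ctx_short by lia. auto.
Qed.

End Tails.
End Reductions.

Theorem theorem4p12 (F V : Type) (ar : F -> nat)
  (R : term F V -> term F V -> Prop) (HR : is_TRS ar R)
  (S : reduction ar R) (s : term F V) (Hs : starts_in S s) :
  (p_continuous S /\ total_red S <-> m_continuous S) /\
  (forall t : term F V,
      p_converges S t /\ total_red S /\ total t <-> m_converges S t).
Proof.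
  assert (Hopen : ~ closed S -> forall i, True -> rterm S i (rpos S i) <> None).
  { intros Hnc i _. destruct (open_succ Hnc i) as [k Hk]. exact (rpos_defined S i k Hk). }
  assert (Hcont : p_continuous S /\ total_red S <-> m_continuous S).
  { split.
    - intros [Hp Ht]. split; auto. intros l Hl.
      apply stabilizes_dlim, (liminf_stabilizes (fun i => rpos_defined S i l)); auto.
    - intros [Ht Hm]. split; auto. intros l Hl. destruct (Hm l Hl) as [Hd Hdep].
      apply (stabilizes_liminf (fun i => rpos_defined S i l)); auto using r_wf, dlim_stabilizes. }
  split; [exact Hcont|]. intros t. split.
  - intros [[Hpc Hend] [Ht Htt]]. split; [apply Hcont; auto|]. split; auto.
    destruct Hend as [Hmax|[Hnc Hlim]]; [left; auto | right]. split; auto.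
    apply stabilizes_dlim, (liminf_stabilizes (Hopen Hnc)); auto.
  - intros [Hm [Htt Hend]]. destruct (proj2 Hcont Hm) as [Hpc Ht].
    split; [split; auto | split; auto].
    destruct Hend as [Hmax|[Hnc [Hd Hdep]]]; [left; auto | right]. split; auto.
    assert (Hst := dlim_stabilizes Hd Hdep).
    apply (stabilizes_liminf (Hopen Hnc)); eauto using stabilizes_wf.
Qed.
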